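(* Let $\mathbb{A}=(A,\backslash,/)$ be a residuation algebra. If $\mathbb{A}$ satisfies $a\backslash(b\vee c)\leq(a\backslash b)\vee(a\backslash c)$ for all $a,b,c\in A$, then the dual structure $\mathbb{A}^\delta_+$ is functional, i.e. for all $y,z\in J^\infty(A^\delta)$, $y\cdot z\in J^\infty(A^\delta)\cup\{\bot\}$.
   Context: A residuation algebra is a structure $(A,\backslash,/)$ where $A$ is a bounded distributive lattice and $\backslash,/$ are binary operations on $A$ such that $\backslash$ preserves finite (including empty) meets in its second coordinate, $/$ preserves finite (including empty) meets in its first coordinate, and for all $a,b,c\in A$: $b\leq a\backslash c$ iff $a\leq c/b$. The canonical extension $A^\delta$ of $A$ is the complete lattice containing $A$ as a sublattice that is dense (every element is a join of meets and a meet of joins of elements of $A$) and compact (if $\bigwedge S\leq\bigvee T$ for $S,T\subseteq A$ then this holds for some finite subsets). Let $K(A^\delta)$ (resp. $O(A^\delta)$) be the set of meets (resp. joins) of subsets of $A$. The $\pi$-extension of $\backslash$ is defined by: for $k\in K(A^\delta)$, $o\in O(A^\delta)$, $k\backslash^\pi o=\bigvee\{a\backslash b\mid a,b\in A,\ k\leq a,\ b\leq o\}$, and for arbitrary $u,v\in A^\delta$, $u\backslash^\pi v=\bigwedge\{k\backslash^\pi o\mid k\in K(A^\delta),\ o\in O(A^\delta),\ k\leq u,\ v\leq o\}$; the $\pi$-extension $/^\pi$ of $/$ is defined symmetrically ($/$ being monotone in its first and antitone in its second coordinate). There is a binary operation $\cdot$ on $A^\delta$, completely join-preserving in each coordinate,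 such that for all $u,v,w\in A^\delta$: $v\leq u\backslash^\pi w$ iff $u\cdot v\leq w$ iff $u\leq w/^\pi v$. $J^\infty(A^\delta)$ is the set of completely join-irreducible elements of $A^\delta$ (those $x$ with $x=\bigvee S\Rightarrow x\in S$ for all $S\subseteq A^\delta$). The dual structure $\mathbb{A}^\delta_+$ is $(J^\infty(A^\delta),\geq,R)$ with $R(x,y,z)$ iff $x\leq y\cdot z$; it is called functional if $y\cdot z\in J^\infty(A^\delta)\cup\{\bot\}$ for all $y,z\in J^\infty(A^\delta)$. *)

From HB Require Import structures.
From mathcomp Require Import all_boot all_order.
Set Implicit Arguments. Unset Strict Implicit. Unset Printing Implicit Defensive.
Import Order.TTheory.
Local Open Scope order_scope.

Record CLat := {
  car :> Type;
  cle : car -> car -> Prop;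
  cle_refl : forall x, cle x x;
  cle_trans : forall x y z, cle x y -> cle y z -> cle x z;
  cle_anti : forall x y, cle x y -> cle y x -> x = y;
  csup : (car -> Prop) -> car;
  csup_ub : forall (S : car -> Prop) x, S x -> cle x (csup S);
  csup_least : forall (S : car -> Prop) y, (forall x, S x -> cle x y) -> cle (csup S) y;
  cinf : (car -> Prop) -> car;
  cinf_lb : forall (S : car -> Prop) x, S x -> cle (cinf S) x;
  cinf_greatest : forall (S : car -> Prop) y, (forall x, S x -> cle y x) -> cle y (cinf S)
}.

Section Defs.
Variables (d : Order.disp_t) (A : tbDistrLatticeType d).

Definition residuation_algebra (ldiv rdiv : A -> A -> A) : Prop :=
  [/\ (forall a b c, ldiv a (b `&` c) = ldiv a b `&` ldiv a c),
      (forall a, ldiv a \top = \top),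
      (forall a b c, rdiv (b `&` c) a = rdiv b a `&` rdiv c a),
      (forall a, rdiv \top a = \top) &
      (forall a b c, (b <= ldiv a c) <-> (a <= rdiv c b))].

Variable C : CLat.
Variable e : A -> C.

Definition img (S : A -> Prop) : C -> Prop := fun x => exists2 a, S a & x = e a.
Definition img_seq (s : seq A) : C -> Prop := fun x => exists2 a, a \in s & x = e a.

Definition closedK (k : C) : Prop := exists S : A -> Prop, k = cinf (img S).
Definition openO (o : C) : Prop := exists S : A -> Prop, o = csup (img S).

(* (C, e) is a canonical extension of A: e is an injective bounded lattice
   homomorphism (A is a bounded sublattice), dense and compact. *)
Definition canonical_extension : Prop :=
  injective e /\
  (forall a b, e (a `&` b) = cinf (fun x => x = e a \/ x = e b)) /\
  (forall a b, e (a `|` b) = csup (fun x => x = e a \/ x = e b)) /\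
  e \top = cinf (fun _ => False) /\
  e \bot = csup (fun _ => False) /\
  (forall u : C, (exists S : C -> Prop, (forall x, S x -> closedK x) /\ u = csup S) /\
                 (exists T : C -> Prop, (forall x, T x -> openO x) /\ u = cinf T)) /\
  (forall S T : A -> Prop, cle (cinf (img S)) (csup (img T)) ->
     exists s t : seq A, (forall a, a \in s -> S a) /\ (forall b, b \in t -> T b) /\
       cle (cinf (img_seq s)) (csup (img_seq t))).

(* pi-extension of \ (antitone in 1st, monotone in 2nd coordinate) *)
Definition ldivKO (ldiv : A -> A -> A) (k o : C) : C :=
  csup (fun x => exists a b, [/\ cle k (e a), cle (e b) o & x = e (ldiv a b)]).
Definition ldiv_pi (ldiv : A -> A -> A) (u v : C) : C :=
  cinf (fun x => exists k o, [/\ closedK k, openO o, cle k u, cle v o & x = ldivKO ldiv k o]).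

(* pi-extension of / (monotone in 1st, antitone in 2nd coordinate) *)
Definition rdivOK (rdiv : A -> A -> A) (o k : C) : C :=
  csup (fun x => exists b a, [/\ cle (e b) o, cle k (e a) & x = e (rdiv b a)]).
Definition rdiv_pi (rdiv : A -> A -> A) (u v : C) : C :=
  cinf (fun x => exists o k, [/\ openO o, closedK k, cle u o, cle k v & x = rdivOK rdiv o k]).

End Defs.

Definition cbot (C : CLat) : C := csup (fun _ : C => False).
Definition completely_join_irreducible (C : CLat) (x : C) : Prop :=
  forall S : C -> Prop, x = csup S -> S x.

From mathcomp Require Import all_boot all_order.
From Stdlib Require Import Classical.
Import Order.TTheory.
Local Open Scope order_scope.
Set Implicit Arguments. Unset Strict Implicit. Unset Printing Implicit Defensive.

(* Every completely join-irreducible y of the extension is the meet of its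
   filter {a | y <= e a}, and by compactness and the (finite) distributivity
   of the extension this filter is prime.  For such y and z, the adjunction
   with the pi-extension of \ and compactness identify y . z with the meet of
   the filter G = {b | exists a, y <= e a /\ z <= e (a \ b)}; the hypothesis
   a\(b v c) <= a\b v a\c and primeness of the filter of z make G prime.  The
   meet of a filter containing bot is bot, and the meet of a proper prime
   filter is completely join-irreducible, again by compactness. *)

Section Filters.
Variables (d : Order.disp_t) (A : tbDistrLatticeType d).
Implicit Types (F : A -> Prop) (a b c : A).

Definition is_filter F :=
  [/\ F \top, forall a b, F a -> F b -> F (a `&` b)
    & forall a b, a <= b -> F a -> F b].

Definition prime_filter F :=
  [/\ is_filter F, ~ F \bot & forall a b, F (a `|` b) -> F a \/ F b].

Lemma filter_bigmeet F (s : seq A) :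
  is_filter F -> (forall a, a \in s -> F a) -> F (\meet_(a <- s) a).
Proof. by move=> [F1 FI _] sF; rewrite big_seq; apply: big_ind. Qed.

Lemma prime_filter_bigjoin F (s : seq A) :
  prime_filter F -> F (\join_(a <- s) a) -> exists2 a, a \in s & F a.
Proof.
move=> [_ Fbot Fprime]; elim: s => [|b s IH]; first by rewrite big_nil.
rewrite big_cons => /Fprime [Fb | /IH [a as_a Fa]].
- by exists b; rewrite ?mem_head.
- by exists a; rewrite // in_cons as_a orbT.
Qed.

Definition filter_adjoin F c : A -> Prop := fun a => exists2 f, F f & f `&` c <= a.

Lemma filter_adjoin_filter F c : is_filter F -> is_filter (filter_adjoin F c).
Proof.
move=> [F1 FI _]; split.
- by exists \top; rewrite ?leIl.
- move=> a b [f Ff fca] [g Fg gcb]; exists (f `&` g); first exact: FI.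
  rewrite lexI; apply/andP; split.
  + by apply: le_trans fca; rewrite leI2 ?leIl.
  + by apply: le_trans gcb; rewrite leI2 ?leIr.
- by move=> a b ab [f Ff fca]; exists f => //; apply: le_trans ab.
Qed.

Lemma filter_adjoin_cap F c1 c2 a : is_filter F -> F (c1 `|` c2) ->
  filter_adjoin F c1 a -> filter_adjoin F c2 a -> F a.
Proof.
move=> [_ FI Fup] Fc [f1 Ff1 f1a] [f2 Ff2 f2a].
apply: (Fup ((f1 `&` f2) `&` (c1 `|` c2))); last exact: FI (FI _ _ Ff1 Ff2) Fc.
rewrite meetUr leUx; apply/andP; split.
- by apply: le_trans f1a; rewrite leI2 ?leIl.
- by apply: le_trans f2a; rewrite leI2 ?leIr.
Qed.

End Filters.

Section CanonicalExtension.
Variables (d : Order.disp_t) (A : tbDistrLatticeType d) (C : CLat) (e : A -> C).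
Hypothesis ext : canonical_extension e.
Implicit Types (F G I : A -> Prop) (a b c : A) (u v : C).

Definition closed_of F : C := cinf (img e F).

Definition filter_above u : A -> Prop := fun a => cle u (e a).

Lemma ce_le a b : cle (e a) (e b) <-> a <= b.
Proof.
have [e_inj [e_meet _]] := ext.
have e_meet_le a' b' : a' <= b' -> e a' = cinf (fun x => x = e a' \/ x = e b').
  by move=> /meet_idPl {1}<-; rewrite e_meet.
split=> [ab | /e_meet_le ->]; last by apply: cinf_lb; right.
apply/meet_idPl/e_inj; rewrite e_meet; apply: cle_anti; first by apply: cinf_lb; left.
by apply: cinf_greatest => x [-> | ->]; [apply: cle_refl | ].
Qed.

Lemma ce_bot_le u : cle (e \bot) u.
Proof. by have [_ [_ [_ [_ [-> _]]]]] := ext; apply: csup_least. Qed.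

Lemma ce_bigjoin_le (s : seq A) u :
  (forall a, a \in s -> cle (e a) u) -> cle (e (\join_(a <- s) a)) u.
Proof.
have [_ [_ [e_join _]]] := ext.
move=> su; rewrite big_seq; apply: (big_ind (fun a => cle (e a) u)) => //.
- exact: ce_bot_le.
- by move=> a b au bu; rewrite e_join; apply: csup_least => x [-> | ->].
Qed.

Lemma closed_of_lb F a : F a -> cle (closed_of F) (e a).
Proof. by move=> Fa; apply: cinf_lb; exists a. Qed.

Lemma le_closed_of F u : (forall a, F a -> cle u (e a)) -> cle u (closed_of F).
Proof. by move=> Fu; apply: cinf_greatest => x [a /Fu ua ->]. Qed.

Lemma closed_of_anti F G :
  (forall a, F a -> G a) -> cle (closed_of G) (closed_of F).
Proof. by move=> FG; apply: le_closed_of => a /FG /closed_of_lb. Qed.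

Lemma le_of_opens u v : (forall o, openO e o -> cle u o -> cle v o) -> cle v u.
Proof.
have [_ [_ [_ [_ [_ [dense _]]]]]] := ext.
have [_ [T [T_open ->]]] := dense u.
by move=> uv; apply: cinf_greatest => t Tt; apply: uv (T_open _ Tt) (cinf_lb Tt).
Qed.

Lemma compact_filter F I : is_filter F -> cle (closed_of F) (csup (img e I)) ->
  exists f s, [/\ F f, forall a, a \in s -> I a & f <= \join_(a <- s) a].
Proof.
have [_ [_ [_ [_ [_ [_ compact]]]]]] := ext.
move=> F_filter /compact [r [s [rF [sI rs]]]].
exists (\meet_(a <- r) a), s; split=> //; first exact: filter_bigmeet.
apply/ce_le; apply: cle_trans (cle_trans _ rs) _.
- by apply: cinf_greatest => x [a ar ->]; apply/ce_le/meets_inf_seq.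
- by apply: csup_least => x [a a_s ->]; apply/ce_le/joins_sup_seq.
Qed.

Lemma compact_filter_open F o : is_filter F -> openO e o ->
  cle (closed_of F) o -> exists2 f, F f & cle (e f) o.
Proof.
move=> F_filter [I ->] /(compact_filter F_filter) [f [s [Ff sI fs]]].
exists f => //; apply: cle_trans (proj2 (ce_le _ _) fs) _.
by apply: ce_bigjoin_le => a /sI Ia; apply: csup_ub; exists a.
Qed.

Lemma compact_prime_filter F I : prime_filter F ->
  cle (closed_of F) (csup (img e I)) -> exists2 a, F a & I a.
Proof.
move=> F_prime; have [F_filter _ _] := F_prime.
move=> /(compact_filter F_filter) [f [s [Ff sI fs]]].
have [_ _ Fup] := F_filter.
have [a a_s Fa] := prime_filter_bigjoin F_prime (Fup _ _ fs Ff).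
by exists a; last exact: sI.
Qed.

Lemma closed_of_cap F1 F2 u : is_filter F1 -> is_filter F2 ->
  cle (closed_of F1) u -> cle (closed_of F2) u ->
  cle (closed_of (fun a => F1 a /\ F2 a)) u.
Proof.
move=> F1_filter F2_filter F1u F2u; apply: le_of_opens => o o_open uo.
have [f1 F1f1 f1o] := compact_filter_open F1_filter o_open (cle_trans F1u uo).
have [f2 F2f2 f2o] := compact_filter_open F2_filter o_open (cle_trans F2u uo).
have [[_ _ F1up] [_ _ F2up]] := (F1_filter, F2_filter).
have F12f : F1 (f1 `|` f2) /\ F2 (f1 `|` f2).
  by split; [apply: F1up F1f1 | apply: F2up F2f2]; rewrite ?leUl ?leUr.
apply: cle_trans (closed_of_lb F12f) _.
by have [_ [_ [-> _]]] := ext; apply: csup_least => x [-> | ->].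
Qed.

Lemma filter_above_filter u : is_filter (filter_above u).
Proof.
have [_ [e_meet [_ [e_top _]]]] := ext.
split=> [|a b ua ub|a b /ce_le ab ua]; rewrite /filter_above.
- by rewrite e_top; apply: cinf_greatest.
- by rewrite e_meet; apply: cinf_greatest => x [-> | ->].
- exact: cle_trans ab.
Qed.

Lemma closedK_above k : closedK e k -> k = closed_of (filter_above k).
Proof.
move=> [F k_eq]; apply: cle_anti; first exact: le_closed_of.
rewrite [X in cle _ X]k_eq; apply: closed_of_anti => a Fa.
by rewrite /filter_above k_eq; apply: closed_of_lb.
Qed.

Lemma cji_closedK y : completely_join_irreducible y -> closedK e y.
Proof.
have [_ [_ [_ [_ [_ [dense _]]]]]] := ext.
move=> y_cji; have [[S [S_closed y_eq]] _] := dense y.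
exact: S_closed _ (y_cji _ y_eq).
Qed.

Lemma cji_filter_above_prime z :
  completely_join_irreducible z -> prime_filter (filter_above z).
Proof.
move=> z_cji; have F_filter := filter_above_filter z.
have z_eq := closedK_above (cji_closedK z_cji).
set F := filter_above z in F_filter z_eq *.
split=> // [z_bot | c1 c2 F12].
  have z_eq_bot : z = csup (fun _ => False).
    by apply: cle_anti (cle_trans z_bot (ce_bot_le _)) _; apply: csup_least.
  exact: z_cji z_eq_bot.
pose z_ c := closed_of (filter_adjoin F c).
have z_le c : cle (z_ c) z.
  by rewrite [X in cle _ X]z_eq; apply: closed_of_anti => a Fa; exists a; rewrite ?leIl.
have z_join : z = csup (fun x => x = z_ c1 \/ x = z_ c2).
  apply: cle_anti; last by apply: csup_least => x [-> | ->]; apply: z_le.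
  have cap_sub a : filter_adjoin F c1 a /\ filter_adjoin F c2 a -> F a.
    by case; apply: filter_adjoin_cap F_filter F12.
  rewrite [X in cle X _]z_eq; apply: cle_trans (closed_of_anti cap_sub) _.
  apply: closed_of_cap; try exact: filter_adjoin_filter.
  - by apply: csup_ub; left.
  - by apply: csup_ub; right.
have z_adjoin c : z = z_ c -> F c.
  move=> zc; rewrite /F /filter_above zc; apply: closed_of_lb.
  by exists \top; [case: F_filter | exact: leIr].
by case: (z_cji _ z_join) => /z_adjoin; [left | right].
Qed.

Lemma prime_filter_cji G : prime_filter G -> completely_join_irreducible (closed_of G).
Proof.
move=> G_prime S k_eq; set k := closed_of G in k_eq *.
suff [s Ss ks] : exists2 s, S s & cle k s.
  by have -> : k = s by apply: cle_anti ks _; rewrite k_eq; apply: csup_ub.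
apply: NNPP => no_s.
have sep s : S s -> exists o, [/\ openO e o, cle s o & ~ cle k o].
  move=> Ss; apply: NNPP => no_o; apply: no_s; exists s => //.
  apply: le_of_opens => o o_open so; apply: NNPP => ko.
  by apply: no_o; exists o.
pose J a := exists o, [/\ openO e o, cle (e a) o & ~ cle k o].
have [a Ga [o [_ ao ko]]] : exists2 a, G a & J a.
  apply: compact_prime_filter G_prime _.
  rewrite -/k [X in cle X _]k_eq; apply: csup_least => s /sep [o [[I o_eq] so ko]].
  apply: cle_trans so _; rewrite o_eq; apply: csup_least => x [a Ia ->].
  apply: csup_ub; exists a => //; exists o; split=> //; first by exists I.
  by rewrite o_eq; apply: csup_ub; exists a.
exact/ko/(cle_trans (closed_of_lb Ga)).
Qed.

Lemma closed_of_bot G : G \bot -> closed_of G = cbot C.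
Proof.
move=> Gbot; apply: cle_anti; last exact: csup_least.
apply: cle_trans (closed_of_lb Gbot) _.
by have [_ [_ [_ [_ [-> _]]]]] := ext; apply: cle_refl.
Qed.

End CanonicalExtension.

Section Residuation.
Variables (d : Order.disp_t) (A : tbDistrLatticeType d) (ldiv rdiv : A -> A -> A).
Hypothesis res : residuation_algebra ldiv rdiv.

Lemma ldiv_monotone a b b' : b <= b' -> ldiv a b <= ldiv a b'.
Proof. by have [ldivI _ _ _ _] := res; move=> /meet_idPl <-; rewrite ldivI leIr. Qed.

Lemma ldiv_antitone a a' c : a' <= a -> ldiv a c <= ldiv a' c.
Proof.
have [_ _ _ _ galois] := res.
by move=> a'a; apply/galois/(le_trans a'a)/galois.
Qed.

End Residuation.

Section Dot.
Variables (d : Order.disp_t) (A : tbDistrLatticeType d) (ldiv rdiv : A -> A -> A).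
Variables (C : CLat) (e : A -> C) (dot : C -> C -> C).
Hypotheses (res : residuation_algebra ldiv rdiv) (ext : canonical_extension e).
Hypothesis dot_ldiv : forall u v w, cle v (ldiv_pi e ldiv u w) <-> cle (dot u v) w.

Definition dot_filter (y z : C) : A -> Prop :=
  fun b => exists2 a, filter_above e y a & filter_above e z (ldiv a b).

Lemma dot_filter_filter y z : is_filter (dot_filter y z).
Proof.
have [[y1 yI _] [z1 zI zup]] := (filter_above_filter ext y, filter_above_filter ext z).
have [ldivI ldiv1 _ _ _] := res.
split=> [|b1 b2 [a1 ya1 za1b1] [a2 ya2 za2b2] | b b' bb' [a ya zab]].
- by exists \top; rewrite // ldiv1.
- exists (a1 `&` a2); first exact: yI.
  by rewrite ldivI; apply: zI; [apply: zup za1b1 | apply: zup za2b2];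
    apply: (ldiv_antitone res); rewrite ?leIl ?leIr.
- by exists a => //; apply: zup zab; apply: (ldiv_monotone res).
Qed.

Lemma dot_filter_join_prime y z :
  completely_join_irreducible z ->
  (forall a b c, ldiv a (b `|` c) <= ldiv a b `|` ldiv a c) ->
  forall b c, dot_filter y z (b `|` c) -> dot_filter y z b \/ dot_filter y z c.
Proof.
move=> z_cji ldivU b c [a ya zabc].
have [[_ _ zup] _ zprime] := cji_filter_above_prime ext z_cji.
by case: (zprime _ _ (zup _ _ (ldivU a b c) zabc)) => ?; [left | right]; exists a.
Qed.

Lemma dot_closed y z :
  completely_join_irreducible y -> completely_join_irreducible z ->
  dot y z = closed_of e (dot_filter y z).
Proof.
move=> y_cji z_cji; apply: cle_anti.
- apply/dot_ldiv; apply: cinf_greatest => x [k [o [_ o_open ky Go ->]]].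
  have [b [a ya zab] bo] := compact_filter_open ext (dot_filter_filter y z) o_open Go.
  apply: cle_trans zab _; apply: csup_ub; exists a, b; split=> //.
  exact: cle_trans ky ya.
- apply: (le_of_opens ext) => o o_open /dot_ldiv z_ldiv.
  pose T c := exists a b, [/\ filter_above e y a, cle (e b) o & c = ldiv a b].
  have : cle (closed_of e (filter_above e z)) (csup (img e T)).
    rewrite -(closedK_above (cji_closedK ext z_cji)).
    apply: cle_trans z_ldiv (cle_trans (cinf_lb _) _).
      exists y, o; split=> //; last exact: cle_refl.
      + exact: (cji_closedK ext y_cji).
      + exact: cle_refl.
    apply: csup_least => x [a [b [ya bo ->]]].
    by apply: csup_ub; exists (ldiv a b) => //; exists a, b.
  case/(compact_prime_filter ext (cji_filter_above_prime ext z_cji)).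
  move=> c zc [a [b [ya bo eq_c]]]; rewrite eq_c in zc.
  by apply: cle_trans bo; apply: closed_of_lb; exists a.
Qed.

End Dot.

Theorem proposition2p5 (d : Order.disp_t) (A : tbDistrLatticeType d)
    (ldiv rdiv : A -> A -> A) (C : CLat) (e : A -> C) (dot : C -> C -> C) :
  residuation_algebra ldiv rdiv ->
  canonical_extension e ->
  (forall u v w : C,
     (cle v (ldiv_pi e ldiv u w) <-> cle (dot u v) w) /\
     (cle (dot u v) w <-> cle u (rdiv_pi e rdiv w v))) ->
  (forall a b c : A, ldiv a (b `|` c) <= ldiv a b `|` ldiv a c) ->
  forall y z : C,
    completely_join_irreducible y -> completely_join_irreducible z ->
    completely_join_irreducible (dot y z) \/ dot y z = cbot C.
Proof.
move=> res ext adj ldivU y z y_cji z_cji.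
have dot_ldiv u v w := proj1 (adj u v w).
rewrite (dot_closed res ext dot_ldiv y_cji z_cji).
have [G_bot | G_nbot] := classic (dot_filter ldiv e y z \bot).
- right; exact: (closed_of_bot ext G_bot).
- left; apply: (prime_filter_cji ext); split=> //.
  + exact: (dot_filter_filter res).
  + exact: (dot_filter_join_prime ext z_cji ldivU).
Qed.
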